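(* Let $\Omega\subset\mathbb{R}^n$ be a bounded convex open set, and suppose there exists $R_0>0$ such that for every $z\in\partial\Omega$ there is a ball of radius at most $R_0$ containing $\Omega$ whose boundary contains $z$. Let $\rho\in(0,1)$ be a constant as described in the context, and let $r_0>0$. Let $x_0\in\Omega$ with $d_0:=d(x_0,\partial\Omega)$ satisfying $$d_0\le\min\Big(\frac{\rho^2}{16(1+4R_0)},\frac{r_0}{2},\frac14\Big),$$ let $v_0$ be a unit vector such that $x_\partial:=x_0+d_0v_0\in\partial\Omega$, set $\theta:=\sqrt{d_0/(6R_0)}$, and let $$E_\theta:=\{x\in\Omega\mid\langle x-x_0,-v_0\rangle\le\theta|x-x_0|\}.$$ Then $$E_\theta\subset B^n_{\sqrt{(1+4R_0)d_0}}(x_\partial)\subset B^n_{\rho/4}(x_\partial).$$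
   Context: $B^n_r(z)$ is the open ball in $\mathbb{R}^n$. The constant $\rho\in(0,1)$ (together with some $L>0$, $C_1>1$) is such that: for each $z\in\partial\Omega$, after a rotation and translation of coordinates, there is an $L$-Lipschitz function $\phi:B^{n-1}_\rho(0)\to(-C_1\rho,C_1\rho)$ with $\mathcal{C}_\rho\cap\Omega=\{(y',y_n)\in\mathcal{C}_\rho\mid y_n>\phi(y')\}$ and $z\in\mathcal{C}_{\rho/2}$, where $\mathcal{C}_r=B^{n-1}_r(0)\times(-2C_1r,2C_1r)$. *)

From HB Require Import structures.
From mathcomp Require Import all_boot all_order all_algebra.
From mathcomp Require Import all_classical all_reals.
Set Implicit Arguments. Unset Strict Implicit. Unset Printing Implicit Defensive.
Import Order.TTheory GRing.Theory Num.Theory.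
Local Open Scope ring_scope.
Local Open Scope classical_set_scope.

(* Euclidean space R^k is modelled by row vectors 'rV[R]_k, with the
   Euclidean inner product and norm defined explicitly (the library's
   default norm on matrices is the sup norm). *)
Section Euclid.
Variable R : realType.

Definition edot k (x y : 'rV[R]_k) : R := \sum_(i < k) x 0 i * y 0 i.
Definition enorm k (x : 'rV[R]_k) : R := Num.sqrt (edot x x).

Definition eball k (c : 'rV[R]_k) (r : R) : set 'rV[R]_k :=
  [set x | enorm (x - c) < r].

Definition eopen k (A : set 'rV[R]_k) : Prop :=
  forall x, A x -> exists2 e : R, 0 < e & eball x e `<=` A.
Definition eclosure k (A : set 'rV[R]_k) : set 'rV[R]_k :=
  [set x | forall e : R, 0 < e -> exists2 y, A y & enorm (y - x) < e].
Definition einterior k (A : set 'rV[R]_k) : set 'rV[R]_k :=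
  [set x | exists2 e : R, 0 < e & eball x e `<=` A].
Definition eboundary k (A : set 'rV[R]_k) : set 'rV[R]_k :=
  eclosure A `\` einterior A.

Definition ebounded k (A : set 'rV[R]_k) : Prop :=
  exists M : R, forall x, A x -> enorm x <= M.
Definition econvex k (A : set 'rV[R]_k) : Prop :=
  forall x y (t : R), A x -> A y -> 0 <= t <= 1 -> A ((1 - t) *: x + t *: y).

Definition edist k (x : 'rV[R]_k) (A : set 'rV[R]_k) : R :=
  inf [set enorm (x - z) | z in A].

Definition yprime n (y : 'rV[R]_n.+1) : 'rV[R]_n :=
  \row_(i < n) y 0 (widen_ord (leqnSn n) i).
Definition ylast n (y : 'rV[R]_n.+1) : R := y 0 ord_max.

Definition cyl n (C1 r : R) : set 'rV[R]_n.+1 :=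
  [set y | enorm (yprime y) < r /\ - (2 * C1 * r) < ylast y < 2 * C1 * r].

(* The Lipschitz-boundary condition of the context, with constants rho, L, C1:
   for every boundary point z, after a rotation Q and translation b of
   coordinates (y = (x - b) Q), there is an L-Lipschitz
   phi : B^(n)_rho(0) -> (-C1 rho, C1 rho) with
   C_rho /\ Omega = {y in C_rho | y_n > phi y'} and z in C_(rho/2). *)
Definition lip_boundary n (Omega : set 'rV[R]_n.+1) (rho L C1 : R) : Prop :=
  forall z, eboundary Omega z ->
  exists (Q : 'M[R]_n.+1) (b : 'rV[R]_n.+1) (phi : 'rV[R]_n -> R),
    [/\ Q *m Q^T = 1%:M /\ \det Q = 1,
        (forall y', eball 0 rho y' -> - (C1 * rho) < phi y' < C1 * rho),
        (forall y1 y2, eball 0 rho y1 -> eball 0 rho y2 ->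
            `|phi y1 - phi y2| <= L * enorm (y1 - y2)),
        (forall x, cyl C1 rho ((x - b) *m Q) ->
            (Omega x <-> phi (yprime ((x - b) *m Q)) < ylast ((x - b) *m Q)))
      & cyl C1 (rho / 2) ((z - b) *m Q)].

End Euclid.

(* The ball B(x0, d0) lies in Omega, hence in the supporting ball B(c, r),
   r <= R0, through x_b; internal tangency at x_b forces c = x_b - r v0 and
   d0 <= r.  For x in E_theta, put w = x - x0: the inequality |x - c| < r,
   the cone condition -<w, v0> <= theta |w| and r theta^2 <= d0/6 give first
   theta |w| <= d0 and then |x - x_b|^2 < 2 r (d0 - <w, v0>) <= 4 r d0. *)
From HB Require Import structures.
From mathcomp Require Import all_boot all_order all_algebra.
From mathcomp Require Import all_classical all_reals.
From mathcomp Require Import ring lra.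
Set Implicit Arguments. Unset Strict Implicit. Unset Printing Implicit Defensive.
Import Order.TTheory GRing.Theory Num.Theory.
Local Open Scope ring_scope.
Local Open Scope classical_set_scope.

Lemma sqrt_mul_le_quarter (R : rcfType) (a b d : R) : 0 < a -> 0 <= b ->
  d <= b ^+ 2 / (16 * a) -> Num.sqrt (a * d) <= b / 4.
Proof.
move=> a0 b0 le_d; have b4 : 0 <= b / 4 by rewrite divr_ge0.
rewrite -[b / 4]ger0_norm // -sqrtr_sqr ler_sqrt ?sqr_ge0 //.
have -> : (b / 4) ^+ 2 = a * (b ^+ 2 / (16 * a)) by field; rewrite gt_eqF.
by rewrite ler_pM2l.
Qed.

Section Euclidean.
Variables (R : realType) (k : nat).
Implicit Types (x y : 'rV[R]_k) (a r : R).

Lemma edot_ge0 x : 0 <= edot x x.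
Proof. by apply: sumr_ge0 => i _; rewrite -expr2 sqr_ge0. Qed.

Lemma edotNr x y : edot x (- y) = - edot x y.
Proof. by rewrite /edot -sumrN; apply: eq_bigr => i _; rewrite mxE mulrN. Qed.

Lemma enorm_ge0 x : 0 <= enorm x.
Proof. exact: sqrtr_ge0. Qed.

Lemma sqr_enorm x : enorm x ^+ 2 = edot x x.
Proof. by rewrite sqr_sqrtr // edot_ge0. Qed.

Lemma sqr_enormDZ x y a :
  enorm (x + a *: y) ^+ 2 = enorm x ^+ 2 + 2 * a * edot x y + a ^+ 2 * enorm y ^+ 2.
Proof.
rewrite !sqr_enorm /edot !mulr_sumr -!big_split /=.
by apply: eq_bigr => i _; rewrite !mxE; ring.
Qed.

Lemma enormZ a x : enorm (a *: x) = `|a| * enorm x.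
Proof.
rewrite /enorm; have -> : edot (a *: x) (a *: x) = a ^+ 2 * edot x x.
  by rewrite /edot mulr_sumr; apply: eq_bigr => i _; rewrite !mxE; ring.
by rewrite sqrtrM ?sqr_ge0 // sqrtr_sqr.
Qed.

Lemma enorm0 : enorm (0 : 'rV[R]_k) = 0.
Proof. by rewrite -(scale0r 0) enormZ normr0 mul0r. Qed.

Lemma enorm_eq0 x : enorm x = 0 -> x = 0.
Proof.
move=> /(congr1 (fun t => t ^+ 2)); rewrite sqr_enorm expr0n /= => /eqP.
rewrite psumr_eq0 => [/allP x0|i _]; last by rewrite -expr2 sqr_ge0.
apply/matrixP => i j; rewrite ord1 mxE.
by have /implyP/(_ isT) := x0 j (mem_index_enum j); rewrite -expr2 sqrf_eq0 => /eqP.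
Qed.

Lemma enorm_lt_sqr x r : 0 <= r -> (enorm x < r) = (enorm x ^+ 2 < r ^+ 2).
Proof. by move=> r0; rewrite ltr_pXn2r // nnegrE ?enorm_ge0. Qed.

(* [y] only witnesses that some unit vector exists, which fails for [k = 0]. *)
Lemma unit_direction x y : enorm y = 1 ->
  exists2 u, enorm u = 1 & x = enorm x *: u.
Proof.
move=> y1; have [->|x0] := eqVneq x 0; first by exists y; rewrite ?enorm0 ?scale0r.
have nx0 : enorm x != 0 by apply: contraNneq x0 => /enorm_eq0 ->.
exists ((enorm x)^-1 *: x); last by rewrite scalerA mulfV ?scale1r.
by rewrite enormZ ger0_norm ?invr_ge0 ?enorm_ge0 // mulVf.
Qed.

Lemma eboundary_open (Omega : set 'rV[R]_k) z : eopen Omega ->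
  eboundary Omega z <-> eclosure Omega z /\ ~ Omega z.
Proof.
move=> oO; split=> [[Cz Iz]|[Cz Oz]]; last split=> // -[e e0 He].
  by split=> // Oz; apply: Iz; exact: oO.
by apply: Oz; apply: He; rewrite /eball /= subrr enorm0.
Qed.

Lemma edist_le x (A : set 'rV[R]_k) z : A z -> edist x A <= enorm (x - z).
Proof.
move=> Az; apply: ge_inf; last by exists z.
by exists 0 => _ [w _ <-]; exact: enorm_ge0.
Qed.

Lemma edist_ge0 x (A : set 'rV[R]_k) z : A z -> 0 <= edist x A.
Proof.
move=> Az; apply: lb_le_inf; first by exists (enorm (x - z)), z.
by move=> _ [w _ <-]; exact: enorm_ge0.
Qed.

Lemma edist_boundary_gt0 (Omega : set 'rV[R]_k) x v : eopen Omega -> Omega x ->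
  eboundary Omega (x + edist x (eboundary Omega) *: v) -> 0 < edist x (eboundary Omega).
Proof.
move=> oO Ox xb_bd; rewrite lt_neqAle (edist_ge0 x xb_bd) andbT.
apply/eqP => d0; have [_] := (eboundary_open _ oO).1 xb_bd.
by rewrite -d0 scale0r addr0.
Qed.

Section SegmentExit.
Variables (Omega : set 'rV[R]_k) (x y : 'rV[R]_k).
Hypotheses (oO : eopen Omega) (Ox : Omega x) (Oy : ~ Omega y).

Let P t := x + t *: (y - x).
Let S := [set t : R | 0 <= t <= 1 /\ Omega (P t)].
Let N := enorm (y - x).

Lemma segment_dist a b : enorm (P a - P b) = `|a - b| * N.
Proof. by rewrite -enormZ /P scalerBl opprD addrACA subrr add0r. Qed.

Let S0 : S 0. Proof. by split; [rewrite lexx ler01 | rewrite /P scale0r addr0]. Qed.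
Let hasS : has_sup S. Proof. by split; [exists 0 | exists 1 => t [/andP[]]]. Qed.
Let N1_gt0 : 0 < N + 1. Proof. by rewrite ltr_wpDl ?enorm_ge0. Qed.
Let sup_S01 : 0 <= sup S <= 1.
Proof.
by apply/andP; split; [exact: sup_upper_bound | apply: ge_sup; [exists 0 | move=> t [/andP[]]]].
Qed.

(* A parameter step of [e / (N + 1)] moves [P] by less than [e]. *)
Lemma exit_point_closure : eclosure Omega (P (sup S)).
Proof.
move=> e e0; have ep0 : 0 < e / (N + 1) by rewrite divr_gt0.
have [t St lt_t] := sup_adherent ep0 hasS.
have le_t := sup_upper_bound hasS St.
exists (P t); first exact: St.2.
rewrite segment_dist ler0_norm ?subr_le0 //.
have : e / (N + 1) * (N + 1) = e by rewrite mulfVK ?gt_eqF.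
have := enorm_ge0 (y - x); rewrite -/N; nra.
Qed.

Lemma exit_point_notin : ~ Omega (P (sup S)).
Proof.
move=> Oz; have [e e0 He] := oO Oz.
have /andP[T0 T1] := sup_S01.
have [T_eq1|T_neq1] := eqVneq (sup S) 1.
  by apply: Oy; move: Oz; rewrite /P T_eq1 scale1r addrC subrK.
set dl := Num.min (1 - sup S) (e / (N + 1)).
have dl_gt0 : 0 < dl by rewrite lt_min subr_gt0 lt_neqAle T_neq1 T1 divr_gt0.
have dl1 : dl <= 1 - sup S by rewrite ge_min lexx.
have dlN : dl * (N + 1) <= e by rewrite -ler_pdivlMr // ge_min lexx orbT.
have Sdl : S (sup S + dl).
  split; first by apply/andP; split; lra.
  apply: He; rewrite /eball /= segment_dist addrAC subrr add0r gtr0_norm //.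
  have := enorm_ge0 (y - x); rewrite -/N; nra.
by have := sup_upper_bound hasS Sdl; lra.
Qed.

Lemma segment_exit_boundary :
  exists2 t, 0 <= t <= 1 & eboundary Omega (x + t *: (y - x)).
Proof.
exists (sup S) => //; apply/eboundary_open => //.
by split; [exact: exit_point_closure | exact: exit_point_notin].
Qed.

End SegmentExit.

Lemma eball_edist_boundary_sub (Omega : set 'rV[R]_k) x : eopen Omega -> Omega x ->
  eball x (edist x (eboundary Omega)) `<=` Omega.
Proof.
move=> oO Ox y; rewrite /eball /= => lt_y; apply: contrapT => Oy.
have [t /andP[t0 t1] Bz] := segment_exit_boundary oO Ox Oy.
have := edist_le x Bz; rewrite opprD addNKr -scaleNr enormZ normrN ger0_norm //.
by have := enorm_ge0 (y - x); nra.
Qed.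

Lemma eball_sub_dist_le x c d r y : 0 < d -> enorm y = 1 ->
  eball x d `<=` eball c r -> enorm (x - c) + d <= r.
Proof.
move=> d0 y1 sub; have [u u1 xc] := unit_direction (x - c) y1.
have lt_r t : 0 < t < d -> enorm (x - c) + t < r.
  move=> /andP[t0 td].
  have : eball x d (x + t *: u) by rewrite /eball /= addrC addKr enormZ u1 mulr1 gtr0_norm.
  move/sub; rewrite /eball /= addrAC {1}xc -scalerDl enormZ u1 mulr1 ger0_norm //.
  by rewrite addr_ge0 ?enorm_ge0 ?ltW.
rewrite leNgt; apply/negP => lt_d.
have half_d := lt_r (d / 2) ltac:(apply/andP; split; lra).
have := lt_r ((d + r - enorm (x - c)) / 2) ltac:(apply/andP; split; lra).
lra.
Qed.

Lemma tangent_ball_center x c v d r : 0 < d -> enorm v = 1 ->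
  eball x d `<=` eball c r -> enorm (x + d *: v - c) = r ->
  c = x + (d - r) *: v /\ d <= r.
Proof.
move=> d0 v1 sub xvc.
have le_r := eball_sub_dist_le d0 v1 sub.
set s := enorm (x - c) in le_r.
have s0 : 0 <= s := enorm_ge0 _.
have : enorm (x - c + d *: v) ^+ 2 = r ^+ 2 by rewrite addrAC xvc.
rewrite sqr_enormDZ v1 expr1n mulr1 -/s => rq.
have dist0 : enorm (x - c + (d - r) *: v) ^+ 2 = 0.
  apply/eqP; rewrite eq_le sqr_ge0 andbT sqr_enormDZ v1 expr1n mulr1 -/s.
  set q := edot (x - c) v in rq *.
  rewrite -(pmulr_rle0 _ d0).
  (* eliminating [edot (x - c) v] leaves [- r (r - d - s) (r - d + s) <= 0] *)
  have := congr1 (fun t => (d - r) * t) rq.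
  have : 0 <= r * ((r - d - s) * (r - d + s)) by rewrite !mulr_ge0 //; lra.
  nra.
move/eqP: dist0; rewrite expf_eq0 /= => /eqP/enorm_eq0/eqP.
by rewrite addrAC subr_eq0 => /eqP <-; split=> //; lra.
Qed.

Lemma cone_sub_tangent_ball x0 v d r theta x : 0 < d <= r -> enorm v = 1 ->
  0 <= theta -> r * theta ^+ 2 <= d / 6 ->
  enorm (x - (x0 + (d - r) *: v)) < r ->
  - edot (x - x0) v <= theta * enorm (x - x0) ->
  enorm (x - (x0 + d *: v)) ^+ 2 < 4 * r * d.
Proof.
move=> /andP[d0 dr] v1 th0 rth + cone.
set w := x - x0 in cone *; set a := enorm w in cone *; set q := edot w v in cone *.
have a0 : 0 <= a := enorm_ge0 _.
have -> : x - (x0 + (d - r) *: v) = w + (r - d) *: v by rewrite opprD addrA -scaleNr opprB.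
rewrite enorm_lt_sqr ?(ltW (lt_le_trans d0 dr)) // sqr_enormDZ v1 expr1n mulr1 -/a -/q => ball.
have -> : x - (x0 + d *: v) = w + (- d) *: v by rewrite opprD addrA scaleNr.
rewrite sqr_enormDZ v1 expr1n mulr1 -/a -/q.
have ha : a ^+ 2 < 2 * r * d + 2 * r * (theta * a).
  have : 0 <= (r - d) * (q + theta * a) by apply: mulr_ge0; lra.
  have : 0 <= d * (theta * a) by rewrite !mulr_ge0 // ltW.
  nra.
have hta : theta * a <= d.
  (* [ha] times [theta^2] gives [t^2 < d^2/3 + t d/3] for [t = theta a], forcing [t <= d] *)
  rewrite leNgt; apply/negP => lt_d.
  have : 0 <= theta ^+ 2 * (2 * r * d + 2 * r * (theta * a) - a ^+ 2).
    by rewrite mulr_ge0 ?sqr_ge0 //; lra.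
  have : 0 <= (d / 6 - r * theta ^+ 2) * d by rewrite mulr_ge0 //; lra.
  have : 0 <= (d / 6 - r * theta ^+ 2) * (theta * a) by rewrite mulr_ge0 ?mulr_ge0 //; lra.
  have : 0 < (theta * a - d) * (theta * a + 2 * d / 3) by rewrite mulr_gt0 //; lra.
  nra.
have : 0 <= r * (theta * a + q) by rewrite mulr_ge0 //; lra.
have : 0 <= r * (d - theta * a) by rewrite mulr_ge0 //; lra.
nra.
Qed.

End Euclidean.
Theorem lemma5p3 (R : realType) (n : nat) (Omega : set 'rV[R]_n.+1)
  (R0 rho L C1 r0 : R) (x0 v0 : 'rV[R]_n.+1) :
  eopen Omega -> ebounded Omega -> econvex Omega ->
  0 < R0 ->
  (forall z, eboundary Omega z ->
     exists (c : 'rV[R]_n.+1) (r : R),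
       [/\ 0 < r, r <= R0, Omega `<=` eball c r & enorm (z - c) = r]) ->
  0 < rho < 1 -> 0 < L -> 1 < C1 -> lip_boundary Omega rho L C1 ->
  0 < r0 ->
  Omega x0 ->
  edist x0 (eboundary Omega) <=
    Num.min (rho ^+ 2 / (16 * (1 + 4 * R0))) (Num.min (r0 / 2) (1 / 4)) ->
  enorm v0 = 1 ->
  eboundary Omega (x0 + edist x0 (eboundary Omega) *: v0) ->
  let d0 := edist x0 (eboundary Omega) in
  let xb := x0 + d0 *: v0 in
  let theta := Num.sqrt (d0 / (6 * R0)) in
  let Etheta := [set x | Omega x /\ edot (x - x0) (- v0) <= theta * enorm (x - x0)] in
  Etheta `<=` eball xb (Num.sqrt ((1 + 4 * R0) * d0)) /\
  eball xb (Num.sqrt ((1 + 4 * R0) * d0)) `<=` eball xb (rho / 4).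
Proof.
move=> oO _ _ R0_gt0 supp /andP[rho_gt0 _] _ _ _ _ Ox0 d0_le v0_unit xb_bd d0 xb theta Etheta.
rewrite -/d0 in d0_le xb_bd; rewrite -/xb in xb_bd.
have [c [r [r_gt0 r_le sub_c xb_c]]] := supp _ xb_bd.
have d0_gt0 : 0 < d0 := edist_boundary_gt0 oO Ox0 xb_bd.
have [c_eq d0_le_r] : c = x0 + (d0 - r) *: v0 /\ d0 <= r.
  apply: tangent_ball_center d0_gt0 v0_unit _ xb_c.
  by apply: subset_trans sub_c; exact: eball_edist_boundary_sub.
split=> [x [Ox cone]|y].
  change (enorm (x - xb) < Num.sqrt ((1 + 4 * R0) * d0)).
  rewrite enorm_lt_sqr ?sqrtr_ge0 // [X in _ < X]sqr_sqrtr ?mulr_ge0 ?addr_ge0 ?mulr_ge0 ?ltW //.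
  have theta2 : theta ^+ 2 = d0 / (6 * R0) by rewrite sqr_sqrtr // divr_ge0 ?mulr_ge0 ?ltW.
  have rth : r * theta ^+ 2 <= d0 / 6.
    have -> : r * theta ^+ 2 = d0 / 6 * (r / R0) by rewrite theta2; field; rewrite gt_eqF.
    apply: ler_piMr; first by rewrite divr_ge0 // ltW.
    by rewrite ler_pdivrMr // mul1r.
  have d0_r : 0 < d0 <= r by rewrite d0_gt0.
  have := cone_sub_tangent_ball (x0 := x0) (x := x) d0_r v0_unit (sqrtr_ge0 _) rth.
  rewrite -c_eq -edotNr => /(_ (sub_c _ Ox) cone) /lt_le_trans; apply.
  by rewrite ler_pM2r //; lra.
rewrite /eball /= => /lt_le_trans; apply; apply: sqrt_mul_le_quarter.
- by rewrite addr_gt0 ?mulr_gt0.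
- exact: ltW.
- by move: d0_le; rewrite le_min => /andP[].
Qed.
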